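(* Let $0<\varepsilon<1$ and $N\ge1$. Then for every $t$, $$\left|F(t)-\hat F_N(t)\right|\le\left(\frac{\hat F_N(t)\big(1-\hat F_N(t)\big)}{N\varepsilon}\right)^{1/2}+\left(\frac1N+\frac{1}{N\varepsilon^{1/2}}\right)\left|\sum_{n=1}^N\mathds{1}\Big(\hat Q^{[n]}-\big|e_Q^{[n]}\big|\le t\le\hat Q^{[n]}+\big|e_Q^{[n]}\big|\Big)\right|+\frac{2}{(2N\varepsilon)^{3/4}}$$ with probability greater than or equal to $1-2\varepsilon+\varepsilon^2$.
   Context: Consider the initial value problem $\dot y=f(y,t;\theta)$, $t\in(0,T]$, $y(0)=y_0$, where $\theta$ is a random parameter, and a linear functional $S$ and threshold $R$. The quantity of interest $Q(y;\theta)=\min_{t\in(0,T]}\arg(S(y(t;\theta))=R)$ (the first time the threshold is reached, assumed to exist) is a random variable with cumulative distribution function $F(t)=P(\{\theta:Q(y;\theta)\le t\})$. Let $\theta^{[1]},\dots,\theta^{[N]}$ be independent samples of $\theta$ (Monte Carlo sampling), let $Q^{[n]}$ be the exact value of the QoI for $\theta^{[n]}$, and let $\hat Q^{[n]}$ be the value computed from a numerical solution $Y^{[n]}$ for $\theta^{[n]}$, with error $e_Q^{[n]}=Q^{[n]}-\hat Q^{[n]}$. Define the nominal empirical CDF $F_N(t)=\frac1N\sum_{n=1}^N\mathds{1}(Q^{[n]}\le t)$ and the approximate empirical CDF $\hat F_N(t)=\frac1N\sum_{n=1}^N\mathds{1}(\hat Q^{[n]}\le t)$, where $\mathds{1}$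 is the indicator function. *)

From HB Require Import structures.
From mathcomp Require Import all_boot all_order all_algebra.
From mathcomp Require Import all_classical all_reals all_analysis.
Set Implicit Arguments. Unset Strict Implicit. Unset Printing Implicit Defensive.
Import Order.TTheory GRing.Theory Num.Theory.
Import numFieldNormedType.Exports.
Local Open Scope classical_set_scope.
Local Open Scope ring_scope.

(* Mutual independence of a finite family of random elements X n : T -> Th:
   the product rule for every choice of measurable sets (taking B n = setT
   recovers the product rule for every subfamily). *)
Definition mutually_independent d d' (T : measurableType d) (R : realType)
  (P : probability T R) (Th : measurableType d') (N : nat)
  (X : 'I_N -> T -> Th) : Prop :=
  forall B : 'I_N -> set Th, (forall n, measurable (B n)) ->
    P (\bigcap_(n in [set: 'I_N]) (X n @^-1` B n)) =
    (\prod_(n < N) P (X n @^-1` B n))%E.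

Definition identically_distributed d d' (T : measurableType d) (R : realType)
  (P : probability T R) (Th : measurableType d') (N : nat)
  (X : 'I_N -> T -> Th) (Y : T -> Th) : Prop :=
  forall n (B : set Th), measurable B -> P (X n @^-1` B) = P (Y @^-1` B).

Definition qoi_cdf d d' (T : measurableType d) (R : realType)
  (P : probability T R) (Th : measurableType d') (theta : T -> Th)
  (Q : Th -> R) (t : R) : R :=
  fine (P [set w | Q (theta w) <= t]).

Definition empirical_cdf d d' (T : measurableType d) (R : realType)
  (Th : measurableType d') (N : nat) (th : 'I_N -> T -> Th)
  (Q : Th -> R) (w : T) (t : R) : R :=
  N%:R^-1 * \sum_(n < N) (nat_of_bool (Q (th n w) <= t))%:R.

From HB Require Import structures.
From mathcomp Require Import all_boot all_order all_algebra.
From mathcomp Require Import all_classical all_reals all_analysis.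
From mathcomp Require Import measurable_realfun ring lra.
Import Order.TTheory GRing.Theory Num.Theory.
Import numFieldNormedType.Exports.
Set Implicit Arguments. Unset Strict Implicit. Unset Printing Implicit Defensive.
Local Open Scope classical_set_scope.
Local Open Scope ring_scope.

(** Let [F_N] be the empirical CDF of the exact QoI.  The events
    [{Q^[n] <= t}] are pairwise independent with probability [F(t)], so the
    count [N F_N] has variance [N F (1 - F)] and Chebyshev's inequality gives
    [|F_N - F| <= sqrt (F (1 - F) / (N eps))] with probability at least
    [1 - eps >= (1 - eps)^2].  The rest is deterministic: [F_N] and [Fhat_N]
    differ by at most [K / N], where [K] counts the samples whose error window
    [[Qhat - |e|, Qhat + |e|]] contains [t]; and
    [F (1 - F) <= Fhat_N (1 - Fhat_N) + |F - Fhat_N|] lets one trade [F] for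
    [Fhat_N] under the square root, at the price of the terms
    [K / (N sqrt eps)] and [2 / (2 N eps)^(3/4)]. *)

Section cdf_algebra.
Variable R : realType.

Lemma powR34_expr4 (z : R) : 0 <= z -> (z `^ (3/4)) ^+ 4 = z ^+ 3.
Proof.
move=> z0; rewrite -powR_mulrn ?powR_ge0 // -powRrM -powR_mulrn //.
by congr (_ `^ _); rewrite mulrC mulrA mulrC mulrA mulVf ?mul1r.
Qed.

Lemma bernoulli_var_le (p : R) : p * (1 - p) <= 4^-1.
Proof.
rewrite -subr_ge0.
have -> : 4^-1 - p * (1 - p) = (p - 2^-1) ^+ 2 by field.
exact: sqr_ge0.
Qed.

Lemma bernoulli_var_lipschitz (p q : R) : 0 <= p <= 1 -> 0 <= q <= 1 ->
  p * (1 - p) <= q * (1 - q) + `|p - q|.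
Proof.
move=> /andP[p0 p1] /andP[q0 q1].
have -> : p * (1 - p) = q * (1 - q) + (p - q) * (1 - p - q) by ring.
rewrite lerD2l (le_trans (ler_norm _)) // normrM ler_piMr //.
by rewrite ler_norml; apply/andP; split; lra.
Qed.

Lemma div_le_sqr_two_div_powR (m s : R) : 0 < m -> 0 <= s -> s ^+ 2 <= (4 * m)^-1 ->
  s / m <= (2 / (2 * m) `^ (3 / 4)) ^+ 2.
Proof.
move=> m0 s0 hs; set u := (2 * m) `^ (3 / 4).
have u0 : 0 < u by rewrite powR_gt0 // mulr_gt0.
have u4 : u ^+ 4 = 8 * m ^+ 3 by rewrite powR34_expr4 ?mulr_ge0 ?ltW //; ring.
have hs' : 4 * m * s ^+ 2 <= 1 by rewrite -ler_pdivlMl ?mulr_gt0 // mulr1.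
have h2 : (s * u ^+ 2 / m) ^+ 2 <= 2.
  rewrite !exprMn -exprD u4.
  have -> : s ^+ 2 * (8 * m ^+ 3) * m^-1 ^+ 2 = 2 * (4 * m * s ^+ 2).
    by field; rewrite gt_eqF.
  lra.
have h0 : 0 <= s * u ^+ 2 / m by rewrite divr_ge0 ?mulr_ge0 ?sqr_ge0 // ltW.
have h4 : s * u ^+ 2 / m <= 4 by move: h2 h0; set X := s * u ^+ 2 / m; nra.
rewrite expr_div_n ler_pdivlMr ?exprn_gt0 // mulrAC; lra.
Qed.

Lemma cdf_dist_bound (n eps F x y : R) (k : nat) :
  0 < n -> 0 < eps -> 0 <= F <= 1 -> 0 <= y <= 1 ->
  `|x - y| <= k%:R / n ->
  `|x - F| <= Num.sqrt (F * (1 - F) / (n * eps)) ->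
  `|F - y| <= Num.sqrt (y * (1 - y) / (n * eps))
              + (n^-1 + (n * Num.sqrt eps)^-1) * `|k%:R|
              + 2 / ((2 * n * eps) `^ (3 / 4)).
Proof.
move=> n0 e0 F01 y01 hxy hxF.
have ne0 : 0 < n * eps by rewrite mulr_gt0.
set c := (n * eps)^-1; have c0 : 0 < c by rewrite invr_gt0.
(* With [c := 1 / (n eps)]: [s^2 <= a^2 + c s + c K / n], where [c s <= e^2]
   and [c K / n <= w^2], hence [s <= a + w + e]. *)
set s := Num.sqrt (F * (1 - F) / (n * eps)).
set a := Num.sqrt (y * (1 - y) / (n * eps)).
have s0 : 0 <= s := sqrtr_ge0 _; have a0 : 0 <= a := sqrtr_ge0 _.
have var01 (p : R) : 0 <= p <= 1 -> 0 <= p * (1 - p).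
  by case/andP=> p0 p1; rewrite mulr_ge0 ?subr_ge0.
have s2 : s ^+ 2 = c * (F * (1 - F)).
  by rewrite sqr_sqrtr ?divr_ge0 ?var01 ?(ltW ne0) // mulrC.
have a2 : a ^+ 2 = c * (y * (1 - y)).
  by rewrite sqr_sqrtr ?divr_ge0 ?var01 ?(ltW ne0) // mulrC.
set K : R := k%:R; have K0 : 0 <= K by rewrite ler0n.
have KK : K <= K ^+ 2.
  by rewrite -natrX ler_nat; case: (k) => // k'; rewrite expnS leq_pmulr ?expn_gt0.
have hFy : `|F - y| <= s + K / n.
  by rewrite -(subrK x F) -addrA (le_trans (ler_normD _ _)) // distrC lerD.
have hs2 : s ^+ 2 <= a ^+ 2 + c * s + c * (K / n).
  rewrite s2 a2 -addrA -!mulrDr ler_wpM2l ?(ltW c0) //.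
  by rewrite (le_trans (bernoulli_var_lipschitz F01 y01)) // lerD2l.
set e := 2 / _; have e0' : 0 <= e.
  by rewrite divr_ge0 ?powR_ge0.
have hcs : c * s <= e ^+ 2.
  rewrite /e -mulrA mulrC; apply: div_le_sqr_two_div_powR => //.
  by rewrite s2 invfM [4^-1 * _]mulrC ler_wpM2l ?(ltW c0) ?bernoulli_var_le.
set w := (n * Num.sqrt eps)^-1 * K.
have w0 : 0 <= w by rewrite mulr_ge0 // invr_ge0 mulr_ge0 ?sqrtr_ge0 // ltW.
have hw : c * (K / n) <= w ^+ 2.
  have -> : w ^+ 2 = c * (K ^+ 2 / n).
    rewrite /w /c exprMn exprVn exprMn sqr_sqrtr ?(ltW e0) //.
    by field; rewrite !gt_eqF.
  by rewrite ler_wpM2l ?(ltW c0) // ler_pM2r ?invr_gt0.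
have : s <= a + w + e by nra.
rewrite (ger0_norm K0) mulrDl -/w [n^-1 * K]mulrC; lra.
Qed.
End cdf_algebra.

Lemma dist_step_le_window (R : realType) (q qh t : R) :
  `|(nat_of_bool (q <= t))%:R - (nat_of_bool (qh <= t))%:R : R|
  <= (nat_of_bool (qh - `|q - qh| <= t <= qh + `|q - qh|))%:R.
Proof.
have h1 := ler_norm (q - qh).
have h2 : qh - q <= `|q - qh| by rewrite distrC ler_norm.
have [hq|hq] := leP q t; have [hqh|hqh] := leP qh t;
  rewrite /= ?subrr ?normr0 ?ler0n //;
  have -> : qh - `|q - qh| <= t <= qh + `|q - qh| by apply/andP; split; lra.
- by rewrite subr0 normr1.
- by rewrite sub0r normrN normr1.
Qed.

Lemma dist_empirical_cdf_le (R : realType) (N : nat) (q qh : 'I_N -> R) (t : R) :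
  `|(N%:R : R)^-1 * \sum_(n < N) (nat_of_bool (q n <= t))%:R
    - N%:R^-1 * \sum_(n < N) (nat_of_bool (qh n <= t))%:R|
  <= (\sum_(n < N) nat_of_bool (qh n - `|q n - qh n| <= t <= qh n + `|q n - qh n|)%R)%:R
     / N%:R.
Proof.
rewrite -mulrBr normrM ger0_norm ?invr_ge0 // mulrC ler_wpM2r ?invr_ge0 //.
rewrite -sumrB natr_sum (le_trans (ler_norm_sum _ _ _)) // ler_sum // => n _.
exact: dist_step_le_window.
Qed.

Section measurability.
Context d (T : measurableType d) (R : realType).

Lemma measurable_set_ler (f g : T -> R) :
  measurable_fun setT f -> measurable_fun setT g -> measurable [set w | f w <= g w].
Proof.
by move=> mf mg; rewrite -[X in measurable X]setTI; exact: measurable_fun_ler.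
Qed.

Lemma measurable_set_ltr (f g : T -> R) :
  measurable_fun setT f -> measurable_fun setT g -> measurable [set w | f w < g w].
Proof.
by move=> mf mg; rewrite -[X in measurable X]setTI; exact: measurable_fun_ltr.
Qed.

Lemma measurable_count (N : nat) (b : 'I_N -> T -> bool) :
  (forall n, measurable_fun setT (b n)) ->
  measurable_fun setT (fun w => \sum_(n < N) (nat_of_bool (b n w))%:R : R).
Proof.
move=> mb; apply: measurable_sum => n.
rewrite (_ : (fun w => _) = (fun w => if b n w then 1 else 0)).
  by apply: measurable_fun_ifT => //; exact: measurable_cst.
by apply/funext => w; case: (b n w).
Qed.

Lemma measurable_set_cdf_bound (F a b e : R) (y K : T -> R) :
  measurable_fun setT y -> measurable_fun setT K ->
  measurable [set w | `|F - y w| <= Num.sqrt (y w * (1 - y w) / a) + b * `|K w| + e].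
Proof.
move=> my mK; have mc (c : R) : measurable_fun setT (fun=> c) := measurable_cst c.
apply: measurable_set_ler.
  by apply: measurableT_comp => //; exact: measurable_funB.
apply: measurable_funD => //; apply: measurable_funD.
  apply: measurableT_comp; first exact: continuous_measurable_fun (@sqrt_continuous R).
  by apply: measurable_funM => //; apply: measurable_funM => //; exact: measurable_funB.
by apply: measurable_funM => //; exact: measurableT_comp.
Qed.
End measurability.

Section markov.
Context d (T : measurableType d) (R : realType) (mu : {measure set T -> \bar R}).
Variable g : T -> R.
Hypotheses (mg : measurable_fun setT g) (g_ge0 : forall w, 0 <= g w).

Lemma markov_ineq (k : R) : 0 < k ->
  (mu [set w | k <= g w]%R <= (k^-1)%:E * \int[mu]_w (g w)%:E)%E.
Proof.
move=> k0; rewrite lee_pdivlMl //.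
have := le_integral_abse mu measurableT ((measurable_EFinP _ _).2 mg) k0.
have -> : [set x | (k%:E <= `|(EFin \o g) x|)%E] = [set w | k <= g w].
  by apply/seteqP; split => w /=; rewrite lee_fin ger0_norm.
by rewrite setTI (eq_integral (EFin \o g)) // => w _ /=; rewrite ger0_norm.
Qed.

Lemma measure_gt0_integral_eq0 : (\int[mu]_w (g w)%:E = 0)%E ->
  mu [set w | 0 < g w] = 0.
Proof.
move=> g0; have mEg : measurable_fun setT (EFin \o g) by exact/measurable_EFinP.
have /(ae_eq_integral_abs mu measurableT mEg) : (\int[mu]_w `|(g w)%:E| = 0)%E.
  by under eq_integral do rewrite abse_EFin ger0_norm //.
move=> /negligibleS-/(_ [set w | 0 < g w]) => null.
apply/negligibleP; first exact: measurable_set_ltr.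
by apply: null => w /= /[swap] /(_ I) [->]; rewrite ltxx.
Qed.
End markov.

Lemma integral_sum_indic d (T : measurableType d) (R : realType)
    (mu : {measure set T -> \bar R}) (I : Type) (s : seq I) (B : I -> set T) :
  (forall i, measurable (B i)) ->
  (\int[mu]_w (\sum_(i <- s) \1_(B i) w)%:E = \sum_(i <- s) mu (B i))%E.
Proof.
move=> mB; under eq_integral do rewrite -sumEFin.
rewrite ge0_integral_sum //.
- by under eq_bigr do rewrite integral_indic // setIT.
- by move=> i; apply/measurable_EFinP; exact: measurable_indic.
Qed.

Section pairwise_independent_events.
Context d (T : measurableType d) (R : realType) (P : probability T R).
Variables (N : nat) (A : 'I_N -> set T) (p : R).
Hypotheses (mA : forall n, measurable (A n)) (pA : forall n, P (A n) = p%:E).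
Hypothesis pAA : forall i j, i != j -> P (A i `&` A j) = (p * p)%:E.

Let S w := \sum_(n < N) \1_(A n) w : R.

Let S_ge0 w : 0 <= S w.
Proof. by apply: sumr_ge0 => n _; rewrite indicE ler0n. Qed.

Let mS : measurable_fun setT S.
Proof. by apply: measurable_sum => n; exact: measurable_indic. Qed.

Lemma integral_count : (\int[P]_w (S w)%:E = (N%:R * p)%:E)%E.
Proof.
rewrite integral_sum_indic // (eq_bigr _ (fun n _ => pA n)).
by rewrite sumEFin sumr_const card_ord mulr_natl.
Qed.

Lemma integral_count_sqr :
  (\int[P]_w (S w ^+ 2)%:E = (N%:R * p + N%:R * (N%:R - 1) * p ^+ 2)%:E)%E.
Proof.
have Sij w : S w ^+ 2 = \sum_(i < N) \sum_(j < N) \1_(A i `&` A j) w.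
  rewrite expr2 big_distrlr; apply: eq_bigr => i _.
  by apply: eq_bigr => j _; rewrite indicI.
have Pij i j : P (A i `&` A j) = (p * p + (i == j)%:R * (p - p * p))%:E.
  have [<-|/pAA ->] := eqVneq i j; last by rewrite mul0r addr0.
  by rewrite setIid pA mul1r addrC subrK.
have row i :
    \sum_(j < N) (p * p + (i == j)%:R * (p - p * p)) = N%:R * (p * p) + (p - p * p).
  rewrite big_split /= sumr_const card_ord mulr_natl -mulr_suml (bigD1 i) //= eqxx.
  by rewrite big1 ?addr0 ?mul1r // => j /negbTE; rewrite eq_sym => ->.
under eq_integral do rewrite Sij pair_bigA.
rewrite integral_sum_indic => [|ij]; last exact: measurableI.
rewrite (eq_bigr _ (fun ij _ => Pij ij.1 ij.2)) sumEFin.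
have -> : \sum_(ij : 'I_N * 'I_N) (p * p + (ij.1 == ij.2)%:R * (p - p * p)) =
    \sum_(i < N) \sum_(j < N) (p * p + (i == j)%:R * (p - p * p)) by rewrite pair_bigA.
rewrite (eq_bigr _ (fun i _ => row i)) sumr_const card_ord; congr (_%:E).
rewrite -mulr_natl; ring.
Qed.

Lemma count_second_moment : 0 <= p ->
  (\int[P]_w ((S w - N%:R * p) ^+ 2)%:E = (N%:R * (p * (1 - p)))%:E)%E.
Proof.
(* Integrating [(S - m)^2 + 2 m S = S^2 + m^2] keeps every integrand
   nonnegative, so no integrability side conditions arise. *)
move=> p0; set m := N%:R * p; have m0 : 0 <= m by rewrite mulr_ge0 ?ler0n.
have msqr : measurable_fun setT (fun w => (S w - m) ^+ 2).
  by apply: measurable_funX; apply: measurable_funB => //; exact: measurable_cst.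
have expand : (\int[P]_w ((S w - m) ^+ 2)%:E + \int[P]_w (2 * m * S w)%:E =
               \int[P]_w (S w ^+ 2)%:E + \int[P]_w (m ^+ 2)%:E)%E.
  rewrite -!ge0_integralD //.
  - by apply: eq_integral => w _; rewrite -!EFinD; congr (_%:E); ring.
  all: try by move=> w _; rewrite lee_fin ?sqr_ge0 ?mulr_ge0.
  - by apply: measurableT_comp => //; exact: measurable_funX.
  - exact: measurableT_comp.
  - by apply: measurableT_comp => //; exact: measurable_funM.
have cst_m : (\int[P]_w (m ^+ 2)%:E = (m ^+ 2)%:E)%E.
  have := @integral_cst _ _ _ P _ measurableT (m ^+ 2)%:E.
  by rewrite [X in (_ * X)%E]probability_setT mule1.
have lin : (\int[P]_w (2 * m * S w)%:E = (2 * m * m)%:E)%E.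
  under eq_integral do rewrite EFinM.
  rewrite ge0_integralZl_EFin ?mulr_ge0 // ?integral_count -?EFinM //.
  - by move=> w _; rewrite lee_fin.
  - exact/measurable_EFinP.
move: expand; rewrite cst_m integral_count_sqr lin.
have : (0 <= \int[P]_w ((S w - m) ^+ 2)%:E)%E.
  by apply: integral_ge0 => w _; rewrite lee_fin sqr_ge0.
case: (\int[P]_w _)%E => // r _ /(congr1 fine) /= h; congr (_%:E).
by apply: (addIr (2 * m * m)); rewrite h /m; ring.
Qed.

Lemma frequency_deviation (eps : R) : 0 < eps -> (0 < N)%N -> 0 <= p <= 1 ->
  (P [set w | Num.sqrt (p * (1 - p) / (N%:R * eps)) < `|N%:R^-1 * S w - p|]%R
   <= eps%:E)%E.
Proof.
move=> e0 N0 /andP[p0 p1]; set n : R := N%:R; have n0 : 0 < n by rewrite ltr0n.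
set s := Num.sqrt _; have s0 : 0 <= s := sqrtr_ge0 _.
have var0 : 0 <= p * (1 - p) by rewrite mulr_ge0 ?subr_ge0.
pose g w := (S w - n * p) ^+ 2.
have mg : measurable_fun setT g.
  by apply: measurable_funX; apply: measurable_funB => //; exact: measurable_cst.
have g0 w : 0 <= g w := sqr_ge0 _.
have dev w : (s < `|n^-1 * S w - p|) = ((n * s) ^+ 2 < g w).
  rewrite -[p in _ - p](mulKf (lt0r_neq0 n0)) -mulrBr normrM gtr0_norm ?invr_gt0 //.
  rewrite ltr_pdivlMl // -ltr_sqr ?nnegrE ?mulr_ge0 ?normr_ge0 ?(ltW n0) //.
  by rewrite real_normK ?num_real.
under eq_set do rewrite dev.
have Eg : (\int[P]_w (g w)%:E = (n * (p * (1 - p)))%:E)%E := count_second_moment p0.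
have [s_gt0|s_le0] := ltP 0 s; last first.
  (* Chebyshev is vacuous here; instead the count equals its mean a.s. *)
  have s_eq0 : s = 0 by apply/eqP; rewrite eq_le s_le0 s0.
  have var_eq0 : p * (1 - p) = 0.
    apply/eqP; rewrite eq_le var0 andbT.
    by move/eqP: s_eq0; rewrite sqrtr_eq0 pmulr_lle0 // invr_gt0 mulr_gt0.
  rewrite s_eq0 mulr0 expr0n /= (measure_gt0_integral_eq0 mg g0) ?lee_fin ?ltW //.
  by rewrite Eg var_eq0 mulr0.
have k0 : 0 < (n * s) ^+ 2 by rewrite exprn_gt0 ?mulr_gt0.
have mk : measurable_fun setT (fun=> (n * s) ^+ 2 : R) := measurable_cst _.
apply: (@le_trans _ _ (P [set w | (n * s) ^+ 2 <= g w])).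
  apply: le_measure; rewrite ?inE; first exact: measurable_set_ltr.
    exact: measurable_set_ler.
  by move=> w /ltW.
apply: le_trans (markov_ineq P mg g0 k0) _.
have var_gt0 : 0 < p * (1 - p).
  by move: s_gt0; rewrite sqrtr_gt0 pmulr_lgt0 // invr_gt0 mulr_gt0.
rewrite Eg -EFinM lee_fin exprMn sqr_sqrtr; last by rewrite divr_ge0 // ltW // mulr_gt0.
suff -> : (n ^+ 2 * (p * (1 - p) / (n * eps)))^-1 * (n * (p * (1 - p))) = eps by [].
field; move: (lt0r_neq0 var_gt0); rewrite mulf_eq0 negb_or => /andP[-> ->].
by rewrite !gt_eqF.
Qed.

End pairwise_independent_events.

Lemma mutually_independent_pair d d' (T : measurableType d) (R : realType)
    (P : probability T R) (Th : measurableType d') (N : nat)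
    (X : 'I_N -> T -> Th) (i j : 'I_N) (B C : set Th) :
  mutually_independent P X -> i != j -> measurable B -> measurable C ->
  P (X i @^-1` B `&` X j @^-1` C) = (P (X i @^-1` B) * P (X j @^-1` C))%E.
Proof.
move=> indX ij mB mC; have ji : j != i by rewrite eq_sym.
pose D k := if k == i then B else if k == j then C else setT.
have mD k : measurable (D k) by rewrite /D; case: ifP => // _; case: ifP.
have := indX D mD; rewrite (bigD1 i) //= (bigD1 j) //= big1 ?mule1; last first.
  by move=> k /andP[ki kj]; rewrite /D (negbTE ki) (negbTE kj) probability_setT.
rewrite /D eqxx (negbTE ji) eqxx => <-; congr (P _); apply/seteqP; split.
  move=> w [Bw Cw] k _ /=; case: ifPn => [/eqP -> //|_].
  by case: ifPn => // /eqP ->.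
by move=> w DX; split; [have := DX i I | have := DX j I]; rewrite /= ?eqxx ?(negbTE ji).
Qed.

Section empirical_cdf.
Context (d d' : measure_display) (T : measurableType d) (R : realType).
Context (P : probability T R).
Context (Th : measurableType d') (theta : T -> Th) (N : nat) (th : 'I_N -> T -> Th).
Variable Q : Th -> R.
Hypotheses (mtheta : measurable_fun setT theta) (mQ : measurable_fun setT Q).
Hypothesis mth : forall n, measurable_fun setT (th n).
Variable t : R.

Let mQt : measurable [set x | Q x <= t].
Proof. by apply: measurable_set_ler => //; exact: measurable_cst. Qed.

Let mQtheta : measurable [set w | Q (theta w) <= t].
Proof. exact: measurable_set_ler (measurableT_comp mQ mtheta) (measurable_cst _). Qed.

Lemma qoi_cdfE : P [set w | Q (theta w) <= t] = (qoi_cdf P theta Q t)%:E.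
Proof. by rewrite /qoi_cdf fineK // fin_num_measure. Qed.

Lemma qoi_cdf_ge0 : 0 <= qoi_cdf P theta Q t.
Proof. by rewrite -lee_fin -qoi_cdfE. Qed.

Lemma qoi_cdf_le1 : qoi_cdf P theta Q t <= 1.
Proof. by rewrite -lee_fin -qoi_cdfE probability_le1. Qed.

Lemma empirical_cdf_ge0 (Q' : Th -> R) w : 0 <= empirical_cdf th Q' w t.
Proof. by rewrite mulr_ge0 ?invr_ge0 ?sumr_ge0. Qed.

Lemma empirical_cdf_le1 (Q' : Th -> R) w : (0 < N)%N -> empirical_cdf th Q' w t <= 1.
Proof.
move=> N0; rewrite /empirical_cdf mulrC ler_pdivrMr ?ltr0n // mul1r.
rewrite -natr_sum ler_nat -[X in (_ <= X)%N]card_ord -sum1_card.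
by apply: leq_sum => n _; exact: leq_b1.
Qed.

Lemma measurable_empirical_cdf (Q' : Th -> R) : measurable_fun setT Q' ->
  measurable_fun setT (fun w => empirical_cdf th Q' w t).
Proof.
move=> mQ'; apply: measurable_funM; first exact: measurable_cst.
apply: measurable_count => n.
by apply: measurable_fun_ler; [exact: measurableT_comp | exact: measurable_cst].
Qed.

Lemma measurable_empirical_cdf_dist (c r : R) :
  measurable [set w | `|empirical_cdf th Q w t - c| <= r].
Proof.
apply: measurable_set_ler; last exact: measurable_cst.
apply: measurableT_comp; first exact: normr_measurable.
by apply: measurable_funB; [exact: measurable_empirical_cdf | exact: measurable_cst].
Qed.

Lemma measurable_window_count (Qh : Th -> R) : measurable_fun setT Qh ->
  measurable_fun setT (fun w => \sum_(n < N)
    (nat_of_bool (Qh (th n w) - `|Q (th n w) - Qh (th n w)| <= t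
                  <= Qh (th n w) + `|Q (th n w) - Qh (th n w)|))%:R : R).
Proof.
move=> mQh; apply: measurable_count => n.
have mQn := measurableT_comp mQ (mth n); have mQhn := measurableT_comp mQh (mth n).
have merr : measurable_fun setT (fun w => `|Q (th n w) - Qh (th n w)|).
  by apply: measurableT_comp; [exact: normr_measurable | exact: measurable_funB].
by apply: measurable_and; apply: measurable_fun_ler;
  solve [exact: measurable_cst | exact: measurable_funB | exact: measurable_funD].
Qed.

Lemma empirical_cdf_concentration (eps : R) :
  mutually_independent P th -> identically_distributed P th theta ->
  0 < eps -> (0 < N)%N ->
  ((1 - eps)%:E <=
   P [set w | `|empirical_cdf th Q w t - qoi_cdf P theta Q t|
              <= Num.sqrt (qoi_cdf P theta Q t * (1 - qoi_cdf P theta Q t)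
                           / (N%:R * eps))]%R)%E.
Proof.
move=> indth idth e0 N0; set F := qoi_cdf P theta Q t.
pose A n := [set w | Q (th n w) <= t].
have mA n : measurable (A n).
  by apply: measurable_set_ler; [exact: measurableT_comp | exact: measurable_cst].
have pA n : P (A n) = F%:E by rewrite -qoi_cdfE; exact: (idth n _ mQt).
have pAA i j : i != j -> P (A i `&` A j) = (F * F)%:E.
  by move=> ij; rewrite [LHS](mutually_independent_pair indth ij mQt mQt) !pA.
have ecdfE w : empirical_cdf th Q w t = N%:R^-1 * \sum_(n < N) \1_(A n) w.
  by congr (_ * _); apply: eq_bigr => n _; rewrite indicE mem_setE.
set E := [set w | _]; have mE : measurable E := measurable_empirical_cdf_dist _ _.
set B := [set w | Num.sqrt (F * (1 - F) / (N%:R * eps))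
                  < `|N%:R^-1 * \sum_(n < N) \1_(A n) w - F|].
have EB : E = ~` B.
  by apply/seteqP; split => w; rewrite /E /B /= ecdfE leNgt => /negP.
have mB : measurable B by rewrite -[B]setCK -EB; exact: measurableC.
rewrite EB probability_setC // EFinB leeB // frequency_deviation //.
by rewrite qoi_cdf_ge0 qoi_cdf_le1.
Qed.

End empirical_cdf.

Theorem theorem4 (R : realType) (d d' : measure_display)
  (T : measurableType d) (P : probability T R) (Th : measurableType d')
  (theta : T -> Th) (N : nat) (th : 'I_N -> T -> Th)
  (Q Qhat : Th -> R) (eps : R) :
  measurable_fun setT theta ->
  (forall n, measurable_fun setT (th n)) ->
  mutually_independent P th ->
  identically_distributed P th theta ->
  measurable_fun setT Q ->
  measurable_fun setT Qhat ->
  0 < eps < 1 -> (1 <= N)%N ->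
  forall t : R,
  ((1 - 2 * eps + eps ^+ 2)%:E <=
   P [set w : T | (let FhN := empirical_cdf th Qhat w t in
     `| qoi_cdf P theta Q t - FhN |
       <= Num.sqrt (FhN * (1 - FhN) / (N%:R * eps))
          + (N%:R^-1 + (N%:R * Num.sqrt eps)^-1)
            * `| \sum_(n < N)
                   (nat_of_bool
                     (Qhat (th n w) - `|Q (th n w) - Qhat (th n w)| <= t <=
                      Qhat (th n w) + `|Q (th n w) - Qhat (th n w)|))%:R |
          + 2 / ((2 * N%:R * eps) `^ (3 / 4)))%R])%E.
Proof.
move=> mtheta mth indth idth mQ mQh /andP[e0 e1] N_gt0 t.
have good := empirical_cdf_concentration mtheta mQ mth t indth idth e0 N_gt0.
set E := [set w | _] in good; set G := [set w | _].
have EG : E `<=` G.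
  move=> w; rewrite /E /G /= -natr_sum => hw.
  apply: cdf_dist_bound hw; rewrite ?ltr0n ?empirical_cdf_ge0 ?empirical_cdf_le1 //.
  - by rewrite qoi_cdf_ge0 ?qoi_cdf_le1.
  - exact: dist_empirical_cdf_le.
have mE : measurable E := measurable_empirical_cdf_dist mQ mth t _ _.
have mG : measurable G.
  apply: measurable_set_cdf_bound; first exact: measurable_empirical_cdf.
  exact: measurable_window_count.
apply: le_trans (le_trans good (le_measure P (mem_set mE) (mem_set mG) EG)).
by rewrite lee_fin; nra.
Qed.
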